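(* In the setting described in the context (no inter-cell interference), suppose the target rate $R_{\tilde k}>0$ satisfies $$R_{\tilde k}<\log_2\left(1+\frac{\beta_{\tilde k}^2|\mu_{\tilde k}|^2}{\sum_{i=1}^K|\zeta_{\tilde i}|^2+\beta_k^2\beta_{\tilde k}^2|\mu_{\tilde k}|^2+\frac{\sigma_{\tilde k}^2}{P\ell(d_{\tilde k})}}\right).$$ Then the outage probability $p_{\tilde k}=\Pr\left(\log_2(1+\mathrm{SINR}_{\tilde k})<R_{\tilde k}\right)$ tends to $0$ as $\sigma_h^2\to0$ (equivalently, as the channel K factor $\mathcal K=\|\hat{\mathbf H}\|_F^2/(\sigma_h^2\mathrm{Tr}(\mathbf R_t)\mathrm{Tr}(\mathbf R_r))\to\infty$), with all other quantities held fixed.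
   Context: Let $K\le\min\{M,N\}$ be positive integers and $k\in\{1,\dots,K\}$. Fix an estimated channel $\hat{\mathbf H}\in\mathbb C^{N\times M}$, Hermitian positive definite correlation matrices $\mathbf R_r\in\mathbb C^{N\times N}$, $\mathbf R_t\in\mathbb C^{M\times M}$, and $\sigma_h^2>0$. The channel-estimation error is $\mathbf E=\mathbf R_r^{1/2}\mathbf E_w\mathbf R_t^{1/2}$ with $\mathrm{vec}(\mathbf E_w)\sim\mathcal{CN}(\mathbf 0,\sigma_h^2\mathbf I_{NM})$. Fix a precoder $\mathbf V=(\mathbf v_1,\dots,\mathbf v_K)\in\mathbb C^{M\times K}$ with $\|\mathbf v_i\|=1$, a nonzero receive filter $\mathbf u\in\mathbb C^N$ (of the far user $\tilde k$), power coefficients $\beta_k,\beta_{\tilde k}\ge0$ with $\beta_k^2+\beta_{\tilde k}^2=1$, transmit power $P>0$, distance $d_{\tilde k}>0$, path loss $\ell(d)=d^{-\alpha}$ with $\alpha>2$, noise variance $\sigma^2\ge0$, and $\sigma_{\tilde k}^2=\sigma^2\|\mathbf u\|^2$. The far user's SINR (with no inter-cell interference) is $$\mathrm{SINR}_{\tilde k}=\frac{P\ell(d_{\tilde k})|\mathbf u^{\mathrm H}\hat{\mathbf H}\mathbf v_k|^2\beta_{\tilde k}^2}{P\ell(d_{\tilde k})\left(|\mathbf u^{\mathrm H}\mathbf E\mathbf v_k|^2\beta_{\tilde k}^2+|\mathbf u^{\mathrm H}(\hat{\mathbf H}+\mathbf E)\mathbf v_k|^2\beta_k^2+\sum_{i\ne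 k}|\mathbf u^{\mathrm H}(\hat{\mathbf H}+\mathbf E)\mathbf v_i|^2\right)+\sigma_{\tilde k}^2}.$$ Define $\mu_{\tilde i}=\mathbf u^{\mathrm H}\hat{\mathbf H}\mathbf v_i$ ($i=1,\dots,K$), $\tilde{\boldsymbol\nu}=(\mu_{\tilde 1},\dots,\mu_{\widetilde{k-1}},\beta_k^2\mu_{\tilde k},\mu_{\widetilde{k+1}},\dots,\mu_{\tilde K})^{\mathrm T}$, $\tilde{\boldsymbol\Sigma}=\sigma_h^2(\mathbf u^{\mathrm H}\mathbf R_r\mathbf u)(\mathbf V^{\mathrm H}\mathbf R_t\mathbf V)^{\mathrm T}$ (the covariance of $(\mathbf u^{\mathrm H}\mathbf E\mathbf V)^{\mathrm T}$), with eigendecomposition $\tilde{\boldsymbol\Sigma}=\tilde{\boldsymbol\Psi}\tilde{\boldsymbol\Delta}\tilde{\boldsymbol\Psi}^{\mathrm H}$ ($\tilde{\boldsymbol\Psi}$ unitary), and let $\zeta_{\tilde i}$ be the $i$-th entry of $\tilde{\boldsymbol\Psi}^{\mathrm H}\tilde{\boldsymbol\nu}$. *)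

From HB Require Import structures.
From mathcomp Require Import all_boot all_order all_algebra.
From mathcomp Require Import all_classical all_reals all_analysis.
From mathcomp Require Import complex.
From mathcomp Require Import sesquilinear spectral.

Set Implicit Arguments.
Unset Strict Implicit.
Unset Printing Implicit Defensive.
Import Order.TTheory GRing.Theory Num.Theory.

Local Open Scope ring_scope.
Local Open Scope classical_set_scope.

Section Defs.
Variable R : realType.
Local Notation C := R[i].

Definition sqmod (z : C) : R := complex.Re z ^+ 2 + complex.Im z ^+ 2.

Definition ctr m n (A : 'M[C]_(m, n)) : 'M[C]_(n, m) := map_mx conjc (A^T).

Definition hermitian n (A : 'M[C]_n) : Prop := ctr A = A.

Definition posdef n (A : 'M[C]_n) : Prop :=
  hermitian A /\ forall x : 'cV[C]_n, x != 0 -> 0 < (ctr x *m A *m x) 0 0.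

Definition sqnorm n (x : 'cV[C]_n) : R := \sum_(i < n) sqmod (x i 0).

Definition log2 (x : R) : R := ln x / ln 2.

Definition pathloss (alpha d : R) : R := d `^ (- alpha).

Definition uAv N M K (u : 'cV[C]_N) (A : 'M[C]_(N, M)) (V : 'M[C]_(M, K))
  (i : 'I_K) : C := (ctr u *m A *m col i V) 0 0.

(* SINR of the far user, as a function of the estimation error E *)
Definition sinr_far N M K (k : 'I_K) (Hh : 'M[C]_(N, M)) (V : 'M[C]_(M, K))
  (u : 'cV[C]_N) (bk bt P alpha d sigma2 : R) (E : 'M[C]_(N, M)) : R :=
  let PL := P * pathloss alpha d in
  (PL * sqmod (uAv u Hh V k) * bt ^+ 2) /
  (PL * (sqmod (uAv u E V k) * bt ^+ 2
         + sqmod (uAv u (Hh + E) V k) * bk ^+ 2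
         + \sum_(i < K | i != k) sqmod (uAv u (Hh + E) V i))
   + sigma2 * sqnorm u).

Definition nu_vec N M K (k : 'I_K) (Hh : 'M[C]_(N, M)) (V : 'M[C]_(M, K))
  (u : 'cV[C]_N) (bk : R) : 'cV[C]_K :=
  \col_(i < K) (if i == k then ((bk ^+ 2)%:C)%C * uAv u Hh V i else uAv u Hh V i).

(* Sigma~ / sigma_h^2 = (u^H R_r u) (V^H R_t V)^T *)
Definition Sigma0 N M K (Rr : 'M[C]_N) (Rt : 'M[C]_M) (V : 'M[C]_(M, K))
  (u : 'cV[C]_N) : 'M[C]_K :=
  (ctr u *m Rr *m u) 0 0 *: (ctr V *m Rt *m V)^T.

Definition mutually_independent d (T : measurableType d) (I : finType)
  (Pr : probability T R) (X : I -> T -> R) : Prop :=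
  forall (J : {set I}) (B : I -> set R), (forall i, measurable (B i)) ->
    Pr (\bigcap_(i in [set j | j \in J]) (X i @^-1` B i))%classic
    = (\prod_(i in J) Pr (X i @^-1` B i)%classic)%E.

End Defs.

From HB Require Import structures.
From mathcomp Require Import all_boot all_order all_algebra.
From mathcomp Require Import all_classical all_reals all_analysis.
From mathcomp Require Import complex.
From mathcomp Require Import sesquilinear spectral.
From mathcomp Require Import measurable_realfun.
From mathcomp Require Import ring lra.
Import Order.TTheory GRing.Theory Num.Theory numFieldNormedType.Exports.
Local Open Scope ring_scope.
Local Open Scope classical_set_scope.

(* Write the error as E = sqrt(s) Ep with Ep := Sr Ew St, where s plays the
   role of sigma_h^2.  Since Psi is unitary, the bound on Rk in the hypothesis
   is log2 (1 + SINR) at E = 0, and log2 (1 + SINR) depends continuously on the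
   interference-plus-error term of the denominator, so it stays above Rk while
   that term moves by less than some c > 0.  For 0 <= sqrt(s) <= 1 the term
   moves by at most sqrt(s) (G + 3 S), where G = sum_i |mu_i|^2 and
   S = sum_i |u^H Ep v_i|^2 does not depend on s.  Hence, for each n, outage
   eventually forces S >= n, and Pr (S >= n) -> 0.  Only the measurability of
   the entries of Ew is used, not their law or independence. *)

Section ComplexModulus.
Context {R : realType}.
Implicit Types (x y : R[i]) (t : R).

Lemma sqmod_ge0 x : 0 <= sqmod x.
Proof. by rewrite addr_ge0 ?sqr_ge0. Qed.

Lemma sqmod0 : sqmod (0 : R[i]) = 0.
Proof. by rewrite /sqmod expr0n addr0. Qed.

Lemma sqmod_realM t x : sqmod (t%:C * x)%C = t ^+ 2 * sqmod x.
Proof. by case: x => p q; rewrite /sqmod /=; ring. Qed.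

Lemma sqmod_perturb_le t x y : 0 <= t <= 1 ->
  `|sqmod (x + t%:C * y)%C - sqmod x| <= t * (sqmod x + 2 * sqmod y).
Proof.
case: x y => p q [r s] /andP[t_ge0 t_le1]; rewrite /sqmod /=.
have cross : `|2 * (p * r + q * s)| <= (p ^+ 2 + q ^+ 2) + (r ^+ 2 + s ^+ 2).
  rewrite ler_norml; apply/andP; split;
    [have := sqr_ge0 (p + r); have := sqr_ge0 (q + s)
    |have := sqr_ge0 (p - r); have := sqr_ge0 (q - s)]; nra.
have -> : (p + (t * r - 0 * s)) ^+ 2 + (q + (t * s + 0 * r)) ^+ 2 - (p ^+ 2 + q ^+ 2)
    = t * (2 * (p * r + q * s)) + t ^+ 2 * (r ^+ 2 + s ^+ 2) by ring.
have sqy_ge0 : 0 <= r ^+ 2 + s ^+ 2 by rewrite addr_ge0 ?sqr_ge0.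
rewrite (le_trans (ler_normD _ _)) // normrM (ger0_norm t_ge0).
rewrite [X in _ + X]ger0_norm ?mulr_ge0 ?exprn_ge0 //.
have : t ^+ 2 * (r ^+ 2 + s ^+ 2) <= t * (r ^+ 2 + s ^+ 2).
  by rewrite expr2 -mulrA ler_piMl ?mulr_ge0.
have := ler_wpM2l t_ge0 cross; lra.
Qed.

Lemma sqnorm_ge0 n (x : 'cV[R[i]]_n) : 0 <= sqnorm x.
Proof. by rewrite sumr_ge0 // => i _; exact: sqmod_ge0. Qed.

End ComplexModulus.

Lemma continuous_log2 {R : realType} (y : R) : 0 < y -> {for y, continuous (@log2 R)}.
Proof. by move=> y_gt0; apply: cvgM; [exact: continuous_ln | exact: cvg_cst]. Qed.

Lemma continuous_gt_ball {R : realType} (f : R -> R) (x0 y : R) :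
  {for x0, continuous f} -> y < f x0 ->
  exists2 c, 0 < c & forall x, `|x0 - x| < c -> y < f x.
Proof.
move=> f_cont y_lt.
have [c c_gt0 near_x0] := (nbhs_ballP _ _).1 (cvgr_gt _ f_cont _ y_lt).
by exists c => // x; apply: near_x0.
Qed.

Section ConjugateTranspose.
Local Open Scope sesquilinear_scope.
Context {R : realType}.

Lemma ctr_mul m n p (A : 'M[R[i]]_(m, n)) (B : 'M[R[i]]_(n, p)) :
  ctr (A *m B) = ctr B *m ctr A.
Proof. by rewrite /ctr trmx_mul map_mxM. Qed.

Lemma ctrK m n (A : 'M[R[i]]_(m, n)) : ctr (ctr A) = A.
Proof. by apply/matrixP => i j; rewrite /ctr !mxE conjcK. Qed.

Lemma sqnormE n (x : 'cV[R[i]]_n) : sqnorm x = complex.Re ((ctr x *m x) 0 0).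
Proof.
rewrite /sqnorm mxE; elim/big_rec2: _ => [//|i z r _ ->].
by rewrite !mxE; case: (x i 0) z => p q [a b] /=; rewrite /sqmod /=; ring.
Qed.

Lemma sqnorm_unitary n (Psi : 'M[R[i]]_n) (x : 'cV[R[i]]_n) :
  Psi \is unitarymx -> sqnorm (ctr Psi *m x) = sqnorm x.
Proof.
move=> /unitarymxP Psi_unitary; have ctrE : ctr Psi = Psi ^t*.
  by apply/matrixP => i j; rewrite !mxE; case: (Psi j i).
by rewrite !sqnormE ctr_mul ctrK mulmxA -(mulmxA _ Psi) ctrE Psi_unitary mulmx1.
Qed.

End ConjugateTranspose.

Lemma measurable_inv {R : realType} : measurable_fun setT (@GRing.inv R).
Proof.
have -> : [set: R] = [set 0] `|` [set x | x != 0].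
  by apply/seteqP; split=> // x _; have [->|] := eqVneq x 0; [left|right].
have neq0_open : open [set x : R | x != 0] by exact: open_neq.
apply/measurable_funU; [by []|exact: open_measurable|split].
- exact: measurable_fun_set1.
- by apply: open_continuous_measurable_fun => // x /[!inE] /inv_continuous.
Qed.

Section ComplexMeasurable.
Context {d : measure_display} {T : measurableType d} {R : realType}.
Implicit Types (f g : T -> R[i]).

Definition cmeasurable f :=
  measurable_fun setT (fun w => complex.Re (f w)) /\
  measurable_fun setT (fun w => complex.Im (f w)).

Lemma cmeasurable_cst (c : R[i]) : cmeasurable (fun=> c).
Proof. by split; exact: measurable_cst. Qed.

Lemma cmeasurableD f g : cmeasurable f -> cmeasurable g ->
  cmeasurable (fun w => f w + g w).
Proof.
move=> [mfr mfi] [mgr mgi]; split.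
- have -> : (fun w => complex.Re (f w + g w)) =
      (fun w => complex.Re (f w) + complex.Re (g w)).
    by apply/funext => w; case: (f w) (g w) => [? ?] [? ?].
  exact: measurable_funD.
- have -> : (fun w => complex.Im (f w + g w)) =
      (fun w => complex.Im (f w) + complex.Im (g w)).
    by apply/funext => w; case: (f w) (g w) => [? ?] [? ?].
  exact: measurable_funD.
Qed.

Lemma cmeasurableM f g : cmeasurable f -> cmeasurable g ->
  cmeasurable (fun w => f w * g w).
Proof.
move=> [mfr mfi] [mgr mgi]; split.
- have -> : (fun w => complex.Re (f w * g w)) =
      (fun w => complex.Re (f w) * complex.Re (g w)
                - complex.Im (f w) * complex.Im (g w)).
    by apply/funext => w; case: (f w) (g w) => [? ?] [? ?].
  by apply: measurable_funB; exact: measurable_funM.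
- have -> : (fun w => complex.Im (f w * g w)) =
      (fun w => complex.Re (f w) * complex.Im (g w)
                + complex.Im (f w) * complex.Re (g w)).
    by apply/funext => w; case: (f w) (g w) => [? ?] [? ?].
  by apply: measurable_funD; exact: measurable_funM.
Qed.

Lemma cmeasurable_sum (I : Type) (r : seq I) (F : I -> T -> R[i]) :
  (forall i, cmeasurable (F i)) -> cmeasurable (fun w => \sum_(i <- r) F i w).
Proof.
move=> mF; elim: r => [|i r mr].
  by under eq_fun do rewrite big_nil; exact: cmeasurable_cst.
by under eq_fun do rewrite big_cons; exact: cmeasurableD.
Qed.

Lemma measurable_sqmod f :
  cmeasurable f -> measurable_fun setT (fun w => sqmod (f w)).
Proof. by move=> [mfr mfi]; apply: measurable_funD; exact: measurable_funX. Qed.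

Definition mxmeasurable {m n} (A : T -> 'M[R[i]]_(m, n)) :=
  forall i j, cmeasurable (fun w => A w i j).

Lemma mxmeasurable_cst {m n} (A : 'M[R[i]]_(m, n)) : mxmeasurable (fun=> A).
Proof. by move=> i j; exact: cmeasurable_cst. Qed.

Lemma mxmeasurableD {m n} (A B : T -> 'M[R[i]]_(m, n)) :
  mxmeasurable A -> mxmeasurable B -> mxmeasurable (fun w => A w + B w).
Proof. by move=> mA mB i j; under eq_fun do rewrite mxE; exact: cmeasurableD. Qed.

Lemma mxmeasurableZ {m n} (c : R[i]) (A : T -> 'M[R[i]]_(m, n)) :
  mxmeasurable A -> mxmeasurable (fun w => c *: A w).
Proof.
move=> mA i j; under eq_fun do rewrite mxE.
by apply: cmeasurableM => //; exact: cmeasurable_cst.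
Qed.

Lemma mxmeasurableM {m n p} (A : T -> 'M[R[i]]_(m, n)) (B : T -> 'M[R[i]]_(n, p)) :
  mxmeasurable A -> mxmeasurable B -> mxmeasurable (fun w => A w *m B w).
Proof.
move=> mA mB i j; under eq_fun do rewrite mxE.
by apply: cmeasurable_sum => l; exact: cmeasurableM.
Qed.

End ComplexMeasurable.

Section ProbabilityTail.
Context {d : measure_display} {T : measurableType d} {R : realType}.
Variable Pr : probability T R.

Lemma measurable_superlevel (S : T -> R) (r : R) :
  measurable_fun setT S -> measurable [set w | r <= S w].
Proof.
move=> mS; rewrite -[X in measurable X]setTI.
exact: (measurable_fun_ler (measurable_cst r) mS measurableT (Y := [set true])).
Qed.

Lemma probability_tail_cvg0 (S : T -> R) : measurable_fun setT S ->
  Pr [set w | n%:R <= S w] @[n --> \oo] --> 0%E.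
Proof.
move=> mS; rewrite -(measure0 Pr).
have -> : set0 = \bigcap_n [set w | n%:R <= S w].
  apply/seteqP; split => // w /= Sw_ge; have := Sw_ge (Num.trunc `|S w|).+1 I.
  by apply/negP; rewrite -ltNge (le_lt_trans (ler_norm _)) // truncnS_gt.
apply: nonincreasing_cvg_mu => [|n||m n mn].
- by rewrite (le_lt_trans (probability_le1 _ _)) ?ltry //; exact: measurable_superlevel.
- exact: measurable_superlevel.
- by apply: bigcapT_measurable => n; exact: measurable_superlevel.
- by apply/subsetPset => w /=; apply: le_trans; rewrite ler_nat.
Qed.

Lemma probability_cvg0_of_tails (F : set_system R) {FF : Filter F}
    (A : R -> set T) (S : T -> R) :
  (forall s, measurable (A s)) -> measurable_fun setT S ->
  (forall n : nat, \forall s \near F, A s `<=` [set w | n%:R <= S w]) ->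
  Pr (A s) @[s --> F] --> 0%E.
Proof.
move=> mA mS A_tail; apply/fine_cvgP; split.
  by apply: nearW => s; exact: fin_num_measure.
apply/cvgr0Pnorm_le => e e_gt0.
have /fine_cvgP[_ /cvgr0_norm_le /(_ e e_gt0) [n _ tail_le]] := probability_tail_cvg0 _ mS.
apply: filterS (A_tail n) => s As_sub /=.
rewrite ger0_norm ?fine_ge0 ?measure_ge0 //.
apply: le_trans (le_trans (ler_norm _) (tail_le n (leqnn n))).
by rewrite fine_le ?fin_num_measure ?le_measure ?inE //; exact: measurable_superlevel.
Qed.
End ProbabilityTail.

Section FarUser.
Context {R : realType} {N M K : nat} {k : 'I_K}.
Context {Hh : 'M[R[i]]_(N, M)} {V : 'M[R[i]]_(M, K)} {u : 'cV[R[i]]_N}.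
Context {bk bt P alpha d sigma2 : R}.
Local Notation PL := (P * pathloss alpha d).
Local Notation sinr := (sinr_far k Hh V u bk bt P alpha d sigma2).

Lemma uAvD (A B : 'M[R[i]]_(N, M)) i :
  uAv u (A + B) V i = uAv u A V i + uAv u B V i.
Proof. by rewrite /uAv mulmxDr mulmxDl mxE. Qed.

Lemma uAvZ c (A : 'M[R[i]]_(N, M)) i : uAv u (c *: A) V i = c * uAv u A V i.
Proof. by rewrite /uAv -scalemxAr -scalemxAl mxE. Qed.

Lemma uAv0 i : uAv u 0 V i = 0.
Proof. by rewrite /uAv mulmx0 mul0mx mxE. Qed.

Definition far_interference (E : 'M[R[i]]_(N, M)) : R :=
  sqmod (uAv u E V k) * bt ^+ 2 + sqmod (uAv u (Hh + E) V k) * bk ^+ 2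
  + \sum_(i < K | i != k) sqmod (uAv u (Hh + E) V i).

Lemma sinr_farE E :
  sinr E = PL * sqmod (uAv u Hh V k) * bt ^+ 2
           / (PL * far_interference E + sigma2 * sqnorm u).
Proof. by []. Qed.

Lemma far_interference_ge0 E : 0 <= far_interference E.
Proof.
have sqmodX_ge0 x (b : R) : 0 <= sqmod x * b ^+ 2.
  by rewrite mulr_ge0 ?sqmod_ge0 ?sqr_ge0.
by rewrite !addr_ge0 ?sqmodX_ge0 ?sumr_ge0 // => i _; exact: sqmod_ge0.
Qed.

Lemma far_interference_perturb_le (E : 'M[R[i]]_(N, M)) (t : R) :
  0 <= t <= 1 -> bk ^+ 2 + bt ^+ 2 = 1 ->
  `|far_interference (t%:C *: E)%C - far_interference 0|
    <= t * (\sum_i sqmod (uAv u Hh V i) + 3 * \sum_i sqmod (uAv u E V i)).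
Proof.
move=> t01 hb; have /andP[t_ge0 t_le1] := t01.
pose a := uAv u Hh V; pose b := uAv u E V.
pose dev i := sqmod (a i + t%:C * b i)%C - sqmod (a i).
have dev_le i : `|dev i| <= t * (sqmod (a i) + 2 * sqmod (b i)).
  exact: sqmod_perturb_le.
have -> : far_interference (t%:C *: E)%C - far_interference 0
    = t ^+ 2 * sqmod (b k) * bt ^+ 2 + dev k * bk ^+ 2 + \sum_(i < K | i != k) dev i.
  rewrite /far_interference addr0 uAv0 sqmod0 uAvD !uAvZ sqmod_realM /dev sumrB.
  under eq_bigr do rewrite uAvD uAvZ.
  rewrite -/a -/b; ring.
have devs_le : `|\sum_(i < K | i != k) dev i|
    <= t * \sum_(i < K | i != k) sqmod (a i)
       + 2 * t * \sum_(i < K | i != k) sqmod (b i).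
  rewrite !mulr_sumr -big_split /=; apply: le_trans (ler_norm_sum _ _ _) _.
  by apply: ler_sum => i _; rewrite (le_trans (dev_le i)) // mulrDr mulrA [t * 2]mulrC.
have sq_le1 (x y : R) : x ^+ 2 + y ^+ 2 = 1 -> x ^+ 2 <= 1.
  by move=> hxy; have := sqr_ge0 y; lra.
have bt2_le1 : bt ^+ 2 <= 1 by apply: (sq_le1 _ bk); rewrite addrC.
have signal_le : t ^+ 2 * sqmod (b k) * bt ^+ 2 <= t * sqmod (b k).
  rewrite (le_trans (ler_piMr _ bt2_le1)) ?mulr_ge0 ?sqmod_ge0 ?sqr_ge0 //.
  by rewrite ler_wpM2r ?sqmod_ge0 // expr2 ler_piMr.
have devk_le : `|dev k * bk ^+ 2| <= t * (sqmod (a k) + 2 * sqmod (b k)).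
  rewrite normrM (ger0_norm (sqr_ge0 bk)) (le_trans _ (dev_le k)) //.
  by rewrite ler_piMr ?(sq_le1 _ bt).
have rest_ge0 : 0 <= t * \sum_(i < K | i != k) sqmod (b i).
  by rewrite mulr_ge0 ?sumr_ge0 // => i _; exact: sqmod_ge0.
rewrite [\sum_i sqmod (uAv u Hh V i)](bigD1 k) //.
rewrite [\sum_i sqmod (uAv u E V i)](bigD1 k) //= -/a -/b.
rewrite (le_trans (ler_normD _ _)) // (le_trans (lerD (ler_normD _ _) (lexx _))) //.
rewrite [`|t ^+ 2 * _ * _|]ger0_norm; first lra.
by rewrite mulr_ge0 ?sqr_ge0 // mulr_ge0 ?sqr_ge0 ?sqmod_ge0.
Qed.

Lemma sinr_far0E (Psi : 'M[R[i]]_K) :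
  Psi \is unitarymx -> bk ^+ 2 + bt ^+ 2 = 1 -> PL != 0 ->
  sinr 0 = bt ^+ 2 * sqmod (uAv u Hh V k) /
    (sqnorm (ctr Psi *m nu_vec k Hh V u bk)
     + bk ^+ 2 * bt ^+ 2 * sqmod (uAv u Hh V k) + sigma2 * sqnorm u / PL).
Proof.
move=> Psi_unitary hb PL_neq0; rewrite sqnorm_unitary // sinr_farE.
move: PL_neq0; move: (P * pathloss alpha d) => L L_neq0.
rewrite /far_interference addr0 uAv0 sqmod0 mul0r add0r.
set A := sqmod (uAv u Hh V k); set G := \sum_(i < K | i != k) _.
have -> : sqnorm (nu_vec k Hh V u bk) = (bk ^+ 2) ^+ 2 * A + G.
  rewrite /sqnorm (bigD1 k) //= mxE eqxx sqmod_realM; congr (_ + _).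
  by apply: eq_bigr => i /negbTE ik; rewrite mxE ik.
have -> : (bk ^+ 2) ^+ 2 * A + G + bk ^+ 2 * bt ^+ 2 * A + sigma2 * sqnorm u / L
    = (L * (A * bk ^+ 2 + G) + sigma2 * sqnorm u) / L.
  have -> : bt ^+ 2 = 1 - bk ^+ 2 by rewrite -hb addrAC subrr add0r.
  by field.
by rewrite invf_div; ring.
Qed.

Lemma far_rate_stable (Rk : R) : 0 < PL -> 0 <= sigma2 -> 0 < Rk ->
  Rk < log2 (1 + sinr 0) -> exists2 c, 0 < c &
    forall E, `|far_interference 0 - far_interference E| < c -> Rk < log2 (1 + sinr E).
Proof.
move=> PL_gt0 sigma2_ge0 Rk_gt0 rate0.
pose x0 := far_interference 0; pose num := PL * sqmod (uAv u Hh V k) * bt ^+ 2.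
pose den x := PL * x + sigma2 * sqnorm u.
have num_ge0 : 0 <= num by rewrite mulr_ge0 ?sqr_ge0 // mulr_ge0 ?sqmod_ge0 ?ltW.
have den0_gt0 : 0 < den x0.
  have den0_ge0 : 0 <= den x0.
    exact: addr_ge0 (mulr_ge0 (ltW PL_gt0) (far_interference_ge0 _))
                    (mulr_ge0 sigma2_ge0 (sqnorm_ge0 _ _)).
  rewrite lt_def den0_ge0 andbT.
  apply: contraTneq rate0 => den0; rewrite -leNgt sinr_farE -/x0 -/(den x0) den0.
  by rewrite invr0 mulr0 addr0 /log2 ln1 mul0r ltW.
have rate_cont : {for x0, continuous (fun x : R => log2 (1 + num / den x))}.
  apply: (continuous_comp (f := fun x => 1 + num / den x)); last first.
    by apply: continuous_log2; rewrite ltr_wpDr // divr_ge0 // ltW.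
  apply: cvgD; first exact: cvg_cst.
  apply: cvgM; first exact: cvg_cst.
  apply: cvgV; first by rewrite gt_eqF.
  apply: cvgD; last exact: cvg_cst.
  by apply: cvgM; [exact: cvg_cst | exact: cvg_id].
rewrite sinr_farE -/x0 -/num -/(den x0) in rate0.
have [c c_gt0 near_x0] := continuous_gt_ball _ _ _ rate_cont rate0.
exists c => [|E /near_x0]; first exact: c_gt0.
by rewrite sinr_farE.
Qed.

Section Outage.
Context {dT : measure_display} {T : measurableType dT}.

Lemma cmeasurable_uAv (A : T -> 'M[R[i]]_(N, M)) i :
  mxmeasurable A -> cmeasurable (fun w => uAv u (A w) V i).
Proof.
move=> mA; rewrite /uAv.
apply: (mxmeasurableM _ _ _ (mxmeasurable_cst _)).
exact: mxmeasurableM _ _ (mxmeasurable_cst _) mA.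
Qed.

Lemma measurable_far_interference (E : T -> 'M[R[i]]_(N, M)) :
  mxmeasurable E -> measurable_fun setT (fun w => far_interference (E w)).
Proof.
move=> mE; have mHE : mxmeasurable (fun w => Hh + E w).
  exact: mxmeasurableD _ _ (mxmeasurable_cst _) mE.
apply: measurable_funD; first apply: measurable_funD.
- by apply: measurable_funM (measurable_cst _); exact/measurable_sqmod/cmeasurable_uAv.
- by apply: measurable_funM (measurable_cst _); exact/measurable_sqmod/cmeasurable_uAv.
under eq_fun do rewrite big_mkcond; apply: measurable_sum => i.
by case: (i != k); [exact/measurable_sqmod/cmeasurable_uAv|exact: measurable_cst].
Qed.

Lemma measurable_far_outage (E : T -> 'M[R[i]]_(N, M)) (Rk : R) :
  mxmeasurable E -> measurable [set w | log2 (1 + sinr (E w)) < Rk].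
Proof.
move=> mE; have mf : measurable_fun setT (fun w => log2 (1 + sinr (E w))).
  apply: measurable_funM (measurable_cst _).
  apply: measurableT_comp; first exact: measurable_ln.
  apply: measurable_funD (measurable_cst _) _; apply: measurable_funM (measurable_cst _) _.
  apply: measurableT_comp; first exact: measurable_inv.
  apply: measurable_funD (measurable_cst _); apply: measurable_funM (measurable_cst _) _.
  exact: measurable_far_interference.
rewrite -[X in measurable X]setTI.
exact: (measurable_fun_ltr mf (measurable_cst Rk) measurableT (Y := [set true])).
Qed.

Lemma far_outage_cvg0 (Pr : probability T R) (Ep : T -> 'M[R[i]]_(N, M)) (Rk : R) :
  mxmeasurable Ep -> 0 < PL -> 0 <= sigma2 -> 0 < Rk -> bk ^+ 2 + bt ^+ 2 = 1 ->
  Rk < log2 (1 + sinr 0) ->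
  Pr [set w | log2 (1 + sinr ((Num.sqrt s)%:C *: Ep w)%C) < Rk] @[s --> (0 : R)^'+]
    --> 0%E.
Proof.
move=> mEp PL_gt0 sigma2_ge0 Rk_gt0 hb rate0.
have [c c_gt0 stable] := far_rate_stable _ PL_gt0 sigma2_ge0 Rk_gt0 rate0.
pose G := \sum_i sqmod (uAv u Hh V i); pose S w := \sum_i sqmod (uAv u (Ep w) V i).
apply: (probability_cvg0_of_tails Pr _ _ S) => [s||n].
- by apply: measurable_far_outage; exact: mxmeasurableZ.
- by apply: measurable_sum => i; exact/measurable_sqmod/cmeasurable_uAv.
have sqrt_cvg0 : Num.sqrt s @[s --> (0 : R)^'+] --> 0.
  by apply: cvg_at_right_filter; rewrite -[X in _ --> X]sqrtr0; exact: sqrt_continuous.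
have bound_cvg0 : Num.sqrt s * (G + 3 * n%:R) @[s --> (0 : R)^'+] --> 0.
  by rewrite -[X in _ --> X](mul0r (G + 3 * n%:R)); exact: cvgM sqrt_cvg0 (cvg_cst _).
near=> s => w /= outage; rewrite leNgt; apply/negP => Sw_lt.
have t01 : 0 <= Num.sqrt s <= 1.
  by rewrite sqrtr_ge0; near: s; exact: cvgr_le sqrt_cvg0 _ ltr01.
suff : Rk < log2 (1 + sinr ((Num.sqrt s)%:C *: Ep w)%C).
  by move/(lt_trans outage); rewrite ltxx.
apply: stable; rewrite distrC (le_lt_trans (far_interference_perturb_le _ _ t01 hb)) //.
apply: le_lt_trans (_ : Num.sqrt s * (G + 3 * n%:R) < c).
  by rewrite ler_wpM2l ?sqrtr_ge0 // lerD2l ler_pM2l // ltW.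
by near: s; exact: cvgr_lt bound_cvg0 _ c_gt0.
Unshelve. all: end_near.
Qed.

End Outage.

End FarUser.

Arguments far_interference {R N M K} k Hh V u bk bt E.

Theorem theorem5 (R : realType) (N M K : nat) (k : 'I_K)
  (hK : (K <= minn M N)%N)
  (Hh : 'M[R[i]]_(N, M)) (Rr Sr : 'M[R[i]]_N) (Rt St : 'M[R[i]]_M)
  (hRr : posdef Rr) (hRt : posdef Rt)
  (hSr : posdef Sr) (hSr2 : Sr *m Sr = Rr)
  (hSt : posdef St) (hSt2 : St *m St = Rt)
  (V : 'M[R[i]]_(M, K)) (hV : forall i : 'I_K, sqnorm (col i V) = 1)
  (u : 'cV[R[i]]_N) (hu : u != 0)
  (bk bt : R) (hbk : 0 <= bk) (hbt : 0 <= bt) (hb : bk ^+ 2 + bt ^+ 2 = 1)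
  (P d alpha sigma2 : R) (hP : 0 < P) (hd : 0 < d) (halpha : 2 < alpha)
  (hsigma2 : 0 <= sigma2)
  (Psi Delta : 'M[R[i]]_K) (hPsi : Psi \is unitarymx) (hDelta : is_diag_mx Delta)
  (hSigma : Sigma0 Rr Rt V u = Psi *m Delta *m ctr Psi)
  (Rk : R) (hRk : 0 < Rk)
  (hrate : Rk < log2 (1 + bt ^+ 2 * sqmod (uAv u Hh V k) /
       (sqnorm (ctr Psi *m nu_vec k Hh V u bk)
        + bk ^+ 2 * bt ^+ 2 * sqmod (uAv u Hh V k)
        + sigma2 * sqnorm u / (P * pathloss alpha d))))
  (dT : measure_display) (T : measurableType dT) (Pr : probability T R)
  (X : 'I_N * 'I_M * bool -> T -> R)
  (hXmeas : forall idx, measurable_fun setT (X idx))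
  (hXind : mutually_independent Pr X)
  (hXlaw : forall idx (A : set R), measurable A ->
     Pr (X idx @^-1` A) = normal_prob 0 (Num.sqrt (2^-1)) A) :
  let Ew := fun w : T =>
    \matrix_(i < N, j < M) (Complex (X (i, j, false) w) (X (i, j, true) w)) in
  (fun s : R =>
     Pr [set w | log2 (1 + sinr_far k Hh V u bk bt P alpha d sigma2
                   (Sr *m ((Complex (Num.sqrt s) 0) *: Ew w) *m St)) < Rk])
    @ 0^'+ --> 0%E.
Proof.
move=> Ew.
have PL_gt0 : 0 < P * pathloss alpha d by rewrite mulr_gt0 // powR_gt0.
rewrite -(sinr_far0E _ hPsi hb (lt0r_neq0 PL_gt0)) in hrate.
have mEw : mxmeasurable Ew.
  by move=> i j; split; under eq_fun do rewrite mxE /=; exact: hXmeas.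
have mEp : mxmeasurable (fun w => Sr *m Ew w *m St).
  apply: (mxmeasurableM _ _ _ (mxmeasurable_cst _)).
  exact: mxmeasurableM _ _ (mxmeasurable_cst _) mEw.
under eq_fun do under eq_set do rewrite -scalemxAr -scalemxAl.
exact: far_outage_cvg0 Pr _ _ mEp PL_gt0 hsigma2 hRk hb hrate.
Qed.
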